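(* Let $p\geq 2$ be an even integer and let $U_p=\bigcup_{n\in 2\mathbb Z_+}\mathbb Z_p^n$. Let $\boldsymbol a,\boldsymbol b\in U_p$ be equivalent (in the sense defined in the context). Then $\varepsilon_p(\boldsymbol a)=\varepsilon_p(\boldsymbol b)$.
   Context: $\mathbb Z_+$ denotes the positive integers and $\mathbb Z_p=\mathbb Z/p\mathbb Z$. Two elements of $U_p$ are called equivalent if they are related by a finite sequence of the following transformations of $(a_1,\ldots,a_n)\in\mathbb Z_p^n$ ($n$ even): (Op1) $(a_1,\ldots,a_n)\to(a_2,\ldots,a_n,a_1)$; (Op2) $(a_1,\ldots,a_n)\to(a, a_2+(-1)^2(a_1-a),\ldots,a_i+(-1)^i(a_1-a),\ldots,a_n+(-1)^n(a_1-a))$ for any $a\in\mathbb Z_p$; (Op3) $(a_1,\ldots,a_n)\to(a, a_1-a_2+a,\ldots,a_1-a_i+a,\ldots,a_1-a_n+a)$ for any $a\in\mathbb Z_p$; (Op4) $(a_1,\ldots,a_n)\to(a_1,-a_1+a_2+a_3,a_3,\ldots,a_n)$ when $n>3$. For $p$ even, parity of elements of $\mathbb Z_p$ is well defined, and $\varepsilon_p:U_p\to\mathbb Z\cup\{\infty\}$ is defined by $\varepsilon_p(a_1,\ldots,a_n)=0$ if $a_1+a_2\equiv a_2+a_3\equiv\cdots\equiv a_n+a_1\equiv 0\pmod 2$, $=1$ if $a_1+a_2\equiv\cdots\equiv a_n+a_1\equiv 1\pmod 2$, and $=\infty$ otherwise. *)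

From mathcomp Require Import all_boot all_algebra.
From Stdlib Require Import Relations.
Set Implicit Arguments. Unset Strict Implicit. Unset Printing Implicit Defensive.
Import GRing.Theory.
Local Open Scope ring_scope.

Definition inU (p : nat) (s : seq 'Z_p) : bool :=
  (0 < size s)%N && ~~ odd (size s).

Definition op1 (p : nat) (s : seq 'Z_p) : seq 'Z_p := rot 1 s.

(* Op2: a_i -> a_i + (-1)^i (a1 - a) (1-based i); for i = 1 this gives a. *)
Definition op2 (p : nat) (a : 'Z_p) (s : seq 'Z_p) : seq 'Z_p :=
  [seq nth 0 s i + (-1) ^+ i.+1 * (nth 0 s 0 - a) | i <- iota 0 (size s)].

Definition op3 (p : nat) (a : 'Z_p) (s : seq 'Z_p) : seq 'Z_p :=
  [seq nth 0 s 0 - x + a | x <- s].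

Definition op4 (p : nat) (s : seq 'Z_p) : seq 'Z_p :=
  match s with
  | a1 :: a2 :: a3 :: r => a1 :: (- a1 + a2 + a3) :: a3 :: r
  | _ => s
  end.

Definition step (p : nat) (s t : seq 'Z_p) : Prop :=
  t = op1 s \/ (exists a, t = op2 a s) \/ (exists a, t = op3 a s)
  \/ ((3 < size s)%N /\ t = op4 s).

(* Equivalence: related by a finite sequence of transformations
   (equivalence closure; the transformations are invertible anyway). *)
Definition equivalent (p : nat) (s t : seq 'Z_p) : Prop :=
  clos_refl_sym_trans (seq 'Z_p) (@step p) s t.

(* parity of an element of Z_p (well defined for p even) *)
Definition parity (p : nat) (x : 'Z_p) : nat := (val x %% 2)%N.

Definition cpairs (p : nat) (s : seq 'Z_p) : seq ('Z_p * 'Z_p) := zip s (rot 1 s).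

(* epsilon_p with values in Z ∪ {∞}: Some k = k, None = ∞ *)
Definition eps (p : nat) (s : seq 'Z_p) : option int :=
  if all (fun xy => (parity xy.1 + parity xy.2) %% 2 == 0)%N (cpairs s) then Some 0%Z
  else if all (fun xy => (parity xy.1 + parity xy.2) %% 2 == 1)%N (cpairs s) then Some 1%Z
  else None.

From mathcomp Require Import all_boot all_algebra.
From mathcomp Require Import zify.
Import GRing.Theory.

Set Implicit Arguments.
Unset Strict Implicit.
Unset Printing Implicit Defensive.

(* Since p is even, reduction mod 2 is additive on Z_p, so eps only sees the
   parities of the cyclic neighbour sums a_i + a_(i+1), and only through the
   multiset they form.  Op1 rotates these edge parities; Op2 and Op3 change
   every a_i by the same amount mod 2 (the sign (-1)^i and the negation are
   invisible mod 2), which leaves every edge parity unchanged; Op4 swaps the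
   parities of the edges (a1, a2) and (a2, a3). *)

Definition edge_parities (l : seq nat) : seq nat :=
  [seq ((xy.1 + xy.2) %% 2)%N | xy <- zip l (rot 1 l)].

Definition eps_of_edges (e : seq nat) : option int :=
  if all (eq_op^~ 0%N) e then Some 0%Z
  else if all (eq_op^~ 1%N) e then Some 1%Z
  else None.

Lemma eps_of_edges_perm (e e' : seq nat) :
  perm_eq e e' -> eps_of_edges e = eps_of_edges e'.
Proof. by move=> ee'; rewrite /eps_of_edges !(perm_all _ ee'). Qed.

Lemma zip_map2 (A B : Type) (f : A -> B) (s t : seq A) :
  zip (map f s) (map f t) = [seq (f xy.1, f xy.2) | xy <- zip s t].
Proof. by elim: s t => [|x s IHs] [|y t] //=; rewrite IHs. Qed.

Lemma rot1_zip (A B : Type) (s : seq A) (t : seq B) :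
  size s = size t -> rot 1 (zip s t) = zip (rot 1 s) (rot 1 t).
Proof.
case: s t => [|x s] [|y t] //= [] eq_st.
by rewrite !rot1_cons zip_rcons.
Qed.

Lemma edge_parities_rot (l : seq nat) :
  edge_parities (rot 1 l) = rot 1 (edge_parities l).
Proof. by rewrite /edge_parities -map_rot rot1_zip ?size_rot. Qed.

Lemma edge_parities_shift (c : nat) (l : seq nat) :
  edge_parities [seq ((q + c) %% 2)%N | q <- l] = edge_parities l.
Proof.
rewrite /edge_parities -map_rot zip_map2 -map_comp.
by apply: eq_map => -[x y] /=; lia.
Qed.

Lemma edge_parities_op4 (q1 q2 q3 : nat) (l : seq nat) :
  perm_eq (edge_parities [:: q1, q2, q3 & l])
          (edge_parities [:: q1, ((q1 + q2) %% 2 + q3) %% 2, q3 & l]%N).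
Proof.
have e12 : ((q1 + ((q1 + q2) %% 2 + q3) %% 2) %% 2 = (q2 + q3) %% 2)%N by lia.
have e23 : ((((q1 + q2) %% 2 + q3) %% 2 + q3) %% 2 = (q1 + q2) %% 2)%N by lia.
by rewrite /edge_parities /= e12 e23 (perm_catCA [:: _] [:: _]).
Qed.

Section ParityZp.
Variable p : nat.
Hypothesis p_gt1 : (1 < p)%N.
Hypothesis p_even : ~~ odd p.

Lemma parity_add (x y : 'Z_p) :
  parity (x + y)%R = ((parity x + parity y) %% 2)%N.
Proof.
rewrite /parity.
have -> : val (x + y)%R = ((val x + val y) %% (Zp_trunc p).+2)%N by [].
move: (val x) (val y) => m n.
by rewrite Zp_cast // modn_dvdm ?dvdn2 // modnDm.
Qed.

Lemma parity_opp (x : 'Z_p) : parity (- x)%R = parity x.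
Proof.
have := parity_add x (- x)%R; rewrite subrr.
have : (parity x < 2)%N by rewrite ltn_mod.
have : (parity (- x)%R < 2)%N by rewrite ltn_mod.
by rewrite /parity /=; lia.
Qed.

Lemma parity_signr k (x : 'Z_p) : parity ((-1) ^+ k * x)%R = parity x.
Proof.
elim: k => [|k IHk]; first by rewrite mul1r.
by rewrite exprS -mulrA mulN1r parity_opp.
Qed.

Lemma eps_edge_parities (s : seq 'Z_p) :
  eps s = eps_of_edges (edge_parities (map (@parity p) s)).
Proof.
by rewrite /eps /eps_of_edges /edge_parities /cpairs -map_rot zip_map2
  -map_comp !all_map.
Qed.

Lemma step_perm_edge_parities (s t : seq 'Z_p) :
  step s t ->
  perm_eq (edge_parities (map (@parity p) s)) (edge_parities (map (@parity p) t)).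
Proof.
case=> [->|[[a ->]|[[a ->]|[s_gt3 ->]]]].
- by rewrite /op1 map_rot edge_parities_rot perm_sym perm_rot.
- suff -> : map (@parity p) (op2 a s) =
      [seq ((q + parity (s`_0 - a)%R) %% 2)%N | q <- map (@parity p) s].
    by rewrite edge_parities_shift.
  rewrite /op2 -[in RHS](mkseq_nth 0%R s) -!map_comp; apply: eq_map => i /=.
  by rewrite mkseq_nth parity_add parity_signr.
- suff -> : map (@parity p) (op3 a s) =
      [seq ((q + (parity (s`_0)%R + parity a)) %% 2)%N | q <- map (@parity p) s].
    by rewrite edge_parities_shift.
  rewrite /op3 -!map_comp; apply: eq_map => x /=.
  by rewrite !parity_add parity_opp; lia.
- case: s s_gt3 => [|a1 [|a2 [|a3 r]]] //= _.
  by rewrite !parity_add parity_opp edge_parities_op4.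
Qed.

Lemma equivalent_eps (s t : seq 'Z_p) :
  equivalent s t -> eps s = eps t.
Proof.
elim=> [{}s {}t st | // | {}s {}t _ -> // | r {}s {}t _ -> _ -> //].
rewrite !eps_edge_parities; apply: eps_of_edges_perm.
exact: step_perm_edge_parities.
Qed.

End ParityZp.

Theorem mainTheorem2 (p : nat) (hp2 : (2 <= p)%N) (hpeven : ~~ odd p)
  (a b : seq 'Z_p) (ha : inU a) (hb : inU b) (hab : equivalent a b) :
  eps a = eps b.
Proof. exact: (equivalent_eps hp2 hpeven hab). Qed.
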